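(* Let $Q$ be an infinite $\mathbb{N}^*\setminus Q$--free set. Then for every real $\nu>0$: $$\sum_{q\in Q}q^{-\nu}<\infty \iff \sum_{\pi\in\mathrm{Supp}(Q)}\pi^{-\nu}<\infty.$$ In particular, $\nu(Q)$ depends only on $\mathrm{Supp}(Q)$.
   Context: $\mathbb{N}^*$ denotes the set of positive integers. A set $Q\subseteq\mathbb{N}^*$ is called $\mathbb{N}^*\setminus Q$--free if for every $q\in\mathbb{N}^*$: $q\in Q$ if and only if no $v\in\mathbb{N}^*\setminus Q$ divides $q$. $\mathrm{Supp}(Q)$ denotes the set of all primes dividing at least one element of $Q$. For an infinite set $Q\subseteq\mathbb{N}^*$, its exponent of convergence is $\nu(Q)=\inf\{\nu>0:\sum_{q\in Q}q^{-\nu}<\infty\}$. *)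

From Stdlib Require Import Reals List Arith ZArith Znumtheory.
Open Scope R_scope.

Definition subset_Nstar (Q : nat -> Prop) : Prop := forall q, Q q -> (1 <= q)%nat.

Definition complement_free (Q : nat -> Prop) : Prop :=
  forall q : nat, (1 <= q)%nat ->
    (Q q <-> ~ (exists v : nat, (1 <= v)%nat /\ ~ Q v /\ Nat.divide v q)).

Definition infinite_set (Q : nat -> Prop) : Prop :=
  forall N : nat, exists q, (N < q)%nat /\ Q q.

Definition is_prime_nat (p : nat) : Prop := prime (Z.of_nat p).

Definition Supp (Q : nat -> Prop) (p : nat) : Prop :=
  is_prime_nat p /\ exists q, Q q /\ Nat.divide p q.

Definition sum_pow_list (nu : R) (l : list nat) : R :=
  fold_right (fun q acc => Rpower (INR q) (- nu) + acc) 0 l.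

(* sum_{q in S} q^(-nu) < infinity, for a set S of positive integers:
   the (nonnegative) unordered sum is finite iff the sums over all finite
   subsets are bounded. *)
Definition summable_pow (S : nat -> Prop) (nu : R) : Prop :=
  exists M : R, forall l : list nat,
    NoDup l -> Forall S l -> sum_pow_list nu l <= M.

(* Proof strategy.
   (=>) For an (N* \ Q)-free set Q every prime p in Supp(Q) lies in Q: otherwise
   p would be a divisor outside Q of some element of Q.  So Supp(Q) is a subset
   of Q and summability passes to it.
   (<=) Every prime factor of an element of Q lies in Supp(Q).  We prove an
   Euler-product bound: for a finite list S of integers >= 2, every finite sum
   of q^(-nu) over distinct S-smooth q is at most exp(c * sum_{p in S} p^(-nu))
   with c = 1/(1 - 2^(-nu)).  This is done by induction on S: adding a prime p
   multiplies the bound by 1 + c p^(-nu) (split the sum into multiples of p,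
   which are p times smaller smooth numbers, and the rest).  A finite sum over
   Q involves only finitely many primes of Supp(Q), whose own sum is bounded by
   the summability of Supp(Q). *)
From Stdlib Require Import Reals List Arith ZArith Znumtheory.
Open Scope R_scope.
From Stdlib Require Import Lia Lra Classical.

Lemma divide_nat_Z a b : Nat.divide a b <-> Z.divide (Z.of_nat a) (Z.of_nat b).
Proof.
  split.
  - intros [k Hk]. exists (Z.of_nat k). subst. now rewrite Nat2Z.inj_mul.
  - intros H. destruct (Nat.eq_dec a 0) as [->|Ha].
    + destruct H as [k Hk]. simpl in Hk. rewrite Z.mul_0_r in Hk.
      assert (b = 0%nat) by lia. subst. apply Nat.divide_0_r.
    + apply Nat.Lcm0.mod_divide. apply Z.mod_divide in H; [|lia].
      rewrite <- Nat2Z.inj_mod in H. lia.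
Qed.

Lemma prime_nat_ge2 p : is_prime_nat p -> (2 <= p)%nat.
Proof. intros H. apply prime_ge_2 in H. lia. Qed.

Lemma exists_prime_divisor n :
  (2 <= n)%nat -> exists r, is_prime_nat r /\ Nat.divide r n.
Proof.
  induction n as [n IH] using lt_wf_ind. intros Hn.
  destruct (prime_dec (Z.of_nat n)) as [Hp|Hp].
  - exists n. split; [exact Hp | apply Nat.divide_refl].
  - destruct (not_prime_divide (Z.of_nat n)) as [m [Hm Hd]]; [lia|exact Hp|].
    destruct (IH (Z.to_nat m)) as [r [Hr Hrd]]; [lia|lia|].
    exists r. split; [exact Hr|]. eapply Nat.divide_trans; [exact Hrd|].
    apply divide_nat_Z. rewrite Z2Nat.id by lia. exact Hd.
Qed.

Definition smooth (S : list nat) (q : nat) : Prop :=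
  forall r, is_prime_nat r -> Nat.divide r q -> In r S.

Lemma smooth_nil_eq_1 q : (1 <= q)%nat -> smooth nil q -> q = 1%nat.
Proof.
  intros Hq Hs. destruct (Nat.eq_dec q 1) as [|Hne]; [assumption|].
  destruct (exists_prime_divisor q) as [r [Hr Hd]]; [lia|].
  destruct (Hs r Hr Hd).
Qed.

Lemma smooth_cons_not_divisible p S q :
  smooth (p :: S) q -> ~ Nat.divide p q -> smooth S q.
Proof.
  intros Hs Hnd r Hr Hrd.
  destruct (Hs r Hr Hrd) as [->|Hin]; [contradiction | exact Hin].
Qed.

Lemma smooth_mul_l S p k : smooth S (k * p) -> smooth S k.
Proof. intros Hs r Hr Hrd. apply Hs; [exact Hr | now apply Nat.divide_mul_l]. Qed.

Lemma Rpower_pos a y : 0 < Rpower a y.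
Proof. unfold Rpower. apply exp_pos. Qed.

Lemma exp_le_compat a b : a <= b -> exp a <= exp b.
Proof. intros [H|H]; [left; now apply exp_increasing | subst; lra]. Qed.

Lemma sum_pow_list_filter nu (b : nat -> bool) l :
  sum_pow_list nu l =
  sum_pow_list nu (filter b l) + sum_pow_list nu (filter (fun q => negb (b q)) l).
Proof. induction l as [|a l IH]; simpl; [lra|]. destruct (b a); simpl; lra. Qed.

Lemma sum_pow_list_multiples nu p l : (1 <= p)%nat ->
  Forall (fun q => (1 <= q)%nat /\ Nat.divide p q) l ->
  sum_pow_list nu l =
  Rpower (INR p) (- nu) * sum_pow_list nu (map (fun q => (q / p)%nat) l).
Proof.
  intros Hp. induction l as [|a l IH]; intros HF; simpl; [lra|].
  inversion HF as [|? ? [Ha1 [k Hk]] HF']; subst.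
  rewrite IH by exact HF'. rewrite Nat.div_mul by lia.
  rewrite mult_INR, <- Rpower_mult_distr.
  - ring.
  - apply lt_0_INR. lia.
  - apply lt_0_INR. destruct k; lia.
Qed.

Lemma NoDup_map_div p l : (1 <= p)%nat -> Forall (Nat.divide p) l ->
  NoDup l -> NoDup (map (fun q => (q / p)%nat) l).
Proof.
  intros Hp HF Hl. apply NoDup_map_NoDup_ForallPairs; [|exact Hl].
  rewrite Forall_forall in HF. intros a b Ha Hb E.
  destruct (HF a Ha) as [ka ->]. destruct (HF b Hb) as [kb ->].
  rewrite !Nat.div_mul in E by lia. now subst.
Qed.

Definition multiples (p : nat) (l : list nat) : list nat :=
  filter (fun q => (q mod p =? 0)%nat) l.
Definition non_multiples (p : nat) (l : list nat) : list nat :=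
  filter (fun q => negb (q mod p =? 0)%nat) l.

Lemma in_multiples p l q : In q (multiples p l) <-> In q l /\ Nat.divide p q.
Proof.
  unfold multiples. rewrite filter_In, Nat.eqb_eq, Nat.Lcm0.mod_divide. tauto.
Qed.

Lemma non_multiples_smooth p S l :
  Forall (fun q => (1 <= q)%nat /\ smooth (p :: S) q) l ->
  Forall (fun q => (1 <= q)%nat /\ smooth S q) (non_multiples p l).
Proof.
  rewrite !Forall_forall. intros HF q Hq.
  apply filter_In in Hq as [Hq Hb]. destruct (HF q Hq) as [Hq1 Hs].
  split; [exact Hq1|]. apply (smooth_cons_not_divisible p); [exact Hs|].
  intros Hd. apply Nat.Lcm0.mod_divide in Hd. now rewrite Hd in Hb.
Qed.

Lemma quotients_of_multiples p S N l : (2 <= p)%nat -> NoDup l ->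
  Forall (fun q => (1 <= q <= Datatypes.S N)%nat /\ smooth S q) l ->
  NoDup (map (fun q => (q / p)%nat) (multiples p l)) /\
  Forall (fun q => (1 <= q <= N)%nat /\ smooth S q)
    (map (fun q => (q / p)%nat) (multiples p l)).
Proof.
  intros Hp Hl HF. rewrite Forall_forall in HF. split.
  - apply NoDup_map_div; [lia| |now apply NoDup_filter].
    apply Forall_forall. intros q Hq. now apply in_multiples in Hq.
  - apply Forall_forall. intros y Hy. apply in_map_iff in Hy as [q [<- Hq]].
    apply in_multiples in Hq as [Hq [k ->]]. destruct (HF _ Hq) as [Hb Hs].
    rewrite Nat.div_mul by lia.
    split; [destruct k; nia | exact (smooth_mul_l _ _ _ Hs)].
Qed.

Section EulerProductBound.
Variable nu : R.
Hypothesis Hnu : 0 < nu.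

(* The constant c = 1/(1 - 2^(-nu)) dominates 1/(1 - p^(-nu)) for every p >= 2. *)
Let c := / (1 - Rpower 2 (- nu)).

Lemma two_pow_lt1 : 0 < Rpower 2 (- nu) < 1.
Proof.
  split; [apply Rpower_pos|].
  rewrite <- (Rpower_O 2) by lra. apply Rpower_lt; lra.
Qed.

Lemma c_pos : 0 < c.
Proof. pose proof two_pow_lt1. unfold c. apply Rinv_0_lt_compat. lra. Qed.

Lemma pow_le_two_pow p : (2 <= p)%nat -> 0 < Rpower (INR p) (- nu) <= Rpower 2 (- nu).
Proof.
  intros Hp. split; [apply Rpower_pos|].
  rewrite !Rpower_Ropp. apply Rinv_le_contravar; [apply Rpower_pos|].
  apply Rle_Rpower_l; [lra|]. split; [lra|].
  replace 2 with (INR 2) by (simpl; lra). now apply le_INR.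
Qed.

Lemma geometric_step K x : 0 <= K -> 0 < x <= Rpower 2 (- nu) ->
  K + x * (K * (1 + c * x)) <= K * (1 + c * x).
Proof.
  intros HK Hx. pose proof two_pow_lt1. pose proof c_pos.
  assert (Hc1 : c * (1 - Rpower 2 (- nu)) = 1) by (unfold c; field; lra).
  assert (Hcx : 1 <= c * (1 - x)) by nra.
  assert (0 <= K * x * (c * (1 - x) - 1))
    by (apply Rmult_le_pos; [apply Rmult_le_pos|]; lra).
  nra.
Qed.

Definition smooth_sums_bounded (S : list nat) (B : R) : Prop :=
  forall l, NoDup l -> Forall (fun q => (1 <= q)%nat /\ smooth S q) l ->
  sum_pow_list nu l <= B.

Lemma smooth_sums_bounded_nil : smooth_sums_bounded nil 1.
Proof.
  intros l Hl HF.
  assert (H1 : Forall (fun q => q = 1%nat) l).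
  { eapply Forall_impl; [|exact HF]. intros q [Hq Hs]. now apply smooth_nil_eq_1. }
  destruct l as [|a [|b l']]; simpl.
  - lra.
  - inversion H1; subst. simpl. unfold Rpower. rewrite ln_1, Rmult_0_r, exp_0. lra.
  - inversion H1 as [|? ? Ha H1']; inversion H1'; subst.
    inversion Hl as [|? ? Hn _]. exfalso. apply Hn. now left.
Qed.

(* Adding a prime p >= 2 to S multiplies the bound by 1 + c p^(-nu).
   Induction on a bound N for the elements: the multiples of p are p times
   smaller (p :: S)-smooth numbers, the rest are S-smooth. *)
Lemma smooth_sums_bounded_cons p S K : (2 <= p)%nat ->
  smooth_sums_bounded S K ->
  smooth_sums_bounded (p :: S) (K * (1 + c * Rpower (INR p) (- nu))).
Proof.
  intros Hp HK. set (x := Rpower (INR p) (- nu)).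
  pose proof (pow_le_two_pow p Hp) as Hx. fold x in Hx.
  assert (HK0 : 0 <= K) by (apply (HK nil); constructor).
  set (B := K * (1 + c * x)).
  assert (Hstep : K + x * B <= B) by exact (geometric_step K x HK0 Hx).
  assert (Hbounded : forall N l, NoDup l ->
    Forall (fun q => (1 <= q <= N)%nat /\ smooth (p :: S) q) l ->
    sum_pow_list nu l <= B).
  { induction N as [|N IHN]; intros l Hl HF.
    - destruct l as [|a l']; [|inversion HF as [|? ? [Ha _] _]; lia].
      pose proof c_pos. unfold B. simpl.
      apply Rmult_le_pos; [lra|]. nra.
    - destruct (quotients_of_multiples p (p :: S) N l Hp Hl HF) as [Hqnd Hqsm].
      assert (Hquot := IHN _ Hqnd Hqsm).
      assert (Hrest : sum_pow_list nu (non_multiples p l) <= K).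
      { apply HK; [now apply NoDup_filter|]. apply non_multiples_smooth.
        eapply Forall_impl; [|exact HF]. intros q [Hq Hs]. split; [lia | exact Hs]. }
      rewrite (sum_pow_list_filter nu (fun q => (q mod p =? 0)%nat) l).
      fold (multiples p l) (non_multiples p l).
      rewrite (sum_pow_list_multiples nu p (multiples p l)); [fold x|lia|].
      + assert (x * sum_pow_list nu (map (fun q => (q / p)%nat) (multiples p l)) <= x * B)
          by (apply Rmult_le_compat_l; lra).
        lra.
      + rewrite Forall_forall in HF |- *. intros q Hq.
        apply in_multiples in Hq as [Hq Hd]. split; [apply (HF q Hq) | exact Hd]. }
  intros l Hl HF. apply (Hbounded (list_max l) l Hl).
  pose proof (proj1 (list_max_le l (list_max l)) (le_n _)) as HM.
  rewrite Forall_forall in HF, HM |- *. intros q Hq.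
  destruct (HF q Hq). repeat split; auto.
Qed.

Lemma smooth_sums_bounded_exp S : Forall (fun p => (2 <= p)%nat) S ->
  smooth_sums_bounded S (exp (c * sum_pow_list nu S)).
Proof.
  induction S as [|p S IH]; intros HS.
  - simpl. rewrite Rmult_0_r, exp_0. exact smooth_sums_bounded_nil.
  - inversion HS as [|? ? Hp HS']; subst.
    intros l Hl HF.
    eapply Rle_trans; [exact (smooth_sums_bounded_cons p S _ Hp (IH HS') l Hl HF)|].
    simpl. rewrite (Rmult_plus_distr_l c), exp_plus, (Rmult_comm (exp (c * _))).
    apply Rmult_le_compat_r; [apply Rlt_le, exp_pos | apply exp_ineq1_le].
Qed.

Lemma prime_divisors_of_list l : Forall (fun q => (1 <= q)%nat) l ->
  exists S, NoDup S /\
    (forall p, In p S -> is_prime_nat p /\ exists q, In q l /\ Nat.divide p q) /\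
    (forall q, In q l -> smooth S q).
Proof.
  intros Hpos. rewrite Forall_forall in Hpos.
  exists (filter (fun p => andb (if prime_dec (Z.of_nat p) then true else false)
                    (existsb (fun q => (q mod p =? 0)%nat) l))
            (seq 0 (S (list_max l)))).
  split; [apply NoDup_filter, seq_NoDup|]. split.
  - intros p Hp. apply filter_In in Hp as [_ Hb].
    apply andb_prop in Hb as [Hb1 Hb2].
    destruct (prime_dec (Z.of_nat p)) as [Hpr|]; [|discriminate].
    split; [exact Hpr|]. apply existsb_exists in Hb2 as [q [Hq Hm]].
    exists q. split; [exact Hq|]. apply Nat.Lcm0.mod_divide. now apply Nat.eqb_eq.
  - intros q Hq r Hr Hrd. apply filter_In. split.
    + apply in_seq. split; [lia|].
      pose proof (Nat.divide_pos_le r q ltac:(specialize (Hpos q Hq); lia) Hrd).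
      pose proof (proj1 (list_max_le l (list_max l)) (le_n _)) as HM.
      rewrite Forall_forall in HM. specialize (HM q Hq). lia.
    + apply andb_true_intro. split.
      * destruct (prime_dec (Z.of_nat r)); [reflexivity | contradiction].
      * apply existsb_exists. exists q. split; [exact Hq|].
        apply Nat.eqb_eq. now apply Nat.Lcm0.mod_divide.
Qed.

Lemma summable_of_prime_factors (Q P : nat -> Prop) :
  subset_Nstar Q ->
  (forall q p, Q q -> is_prime_nat p -> Nat.divide p q -> P p) ->
  summable_pow P nu -> summable_pow Q nu.
Proof.
  intros HQpos HQP [M HM]. exists (exp (c * M)). intros l Hl HF.
  rewrite Forall_forall in HF.
  destruct (prime_divisors_of_list l) as [S [HSnd [HSp HSsm]]].
  { apply Forall_forall. intros q Hq. exact (HQpos q (HF q Hq)). }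
  eapply Rle_trans; [apply (smooth_sums_bounded_exp S)|].
  - apply Forall_forall. intros p Hp. apply prime_nat_ge2, (HSp p Hp).
  - exact Hl.
  - apply Forall_forall. intros q Hq. split; [exact (HQpos q (HF q Hq)) | exact (HSsm q Hq)].
  - apply exp_le_compat, Rmult_le_compat_l; [apply Rlt_le, c_pos|].
    apply HM; [exact HSnd|]. apply Forall_forall. intros p Hp.
    destruct (HSp p Hp) as [Hpr [q [Hq Hd]]]. exact (HQP q p (HF q Hq) Hpr Hd).
Qed.

End EulerProductBound.

Lemma summable_pow_subset (A B : nat -> Prop) nu :
  (forall n, A n -> B n) -> summable_pow B nu -> summable_pow A nu.
Proof.
  intros HAB [M HM]. exists M. intros l Hl HF. apply HM; [exact Hl|].
  eapply Forall_impl; [exact HAB | exact HF].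
Qed.

Lemma Supp_subset_of_free (Q : nat -> Prop) :
  subset_Nstar Q -> complement_free Q -> forall p, Supp Q p -> Q p.
Proof.
  intros HQpos Hfree p [Hp [q [Hq Hd]]]. apply NNPP. intros Hnp.
  pose proof (prime_nat_ge2 p Hp).
  apply (proj1 (Hfree q (HQpos q Hq)) Hq). exists p. repeat split; auto. lia.
Qed.

Theorem mainTheorem5 (Q : nat -> Prop)
  (HQpos : subset_Nstar Q)
  (Hfree : complement_free Q)
  (Hinf : infinite_set Q) :
  forall nu : R, 0 < nu ->
    (summable_pow Q nu <-> summable_pow (Supp Q) nu).
Proof.
  intros nu Hnu. split.
  - apply summable_pow_subset. exact (Supp_subset_of_free Q HQpos Hfree).
  - apply (summable_of_prime_factors nu Hnu Q (Supp Q) HQpos).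
    intros q p Hq Hp Hd. split; [exact Hp|]. now exists q.
Qed.
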